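(* Let $\vec{\mathcal G}=([n],E)$ be a directed graph with $m=|E|$ edges in which every vertex has at least one outgoing edge and which has a single strongly connected component. Let the weights $(r_{ij})$ be independent absolutely continuous random variables with densities $f_{ij}$ satisfying $f_{ij}(y)\le\phi$ for all $(i,j),y$, for some $\phi>0$. Let $\delta=1/(3n^2m\phi)$. Then $$\mathbb P\bigl(\exists \text{ a cycle } C:\ B_\infty(r,\delta)\subseteq\mathcal P^{C}\bigr)\ge 1-\frac1n,$$ where $B_\infty(r,\delta)=\{\tilde r\in\mathbb R^m:\|r-\tilde r\|_\infty\le\delta\}$.
   Context: The mean weight of a directed cycle is the sum of its edge weights divided by its number of edges. For a directed cycle $C$, $\mathcal P^{C}$ is the set of $r\in\mathbb R^m$ such that $C$ is the unique cycle of minimum mean weight in $\vec{\mathcal G}$ with weights $r$. *)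

From HB Require Import structures.
From mathcomp Require Import all_boot all_order all_algebra.
From mathcomp Require Import all_classical all_reals all_analysis.

Set Implicit Arguments.
Unset Strict Implicit.
Unset Printing Implicit Defensive.

Import Order.TTheory GRing.Theory Num.Theory.
Local Open Scope ring_scope.

(* Directed graph on vertex set 'I_n given by its edge set E.  Edge weights
   are functions 'I_n * 'I_n -> R (only the values on E matter). *)

(* A one-vertex sequence gives a self-loop. *)
Definition is_dcycle (n : nat) (E : {set 'I_n * 'I_n}) (C : {set 'I_n * 'I_n}) :=
  exists s : seq 'I_n,
    [/\ s != [::], uniq s, C = [set (x, next s x) | x in s] & C \subset E].

Definition mean_weight (R : realType) (n : nat) (w : 'I_n * 'I_n -> R)
  (C : {set 'I_n * 'I_n}) : R :=
  (\sum_(e in C) w e) / (#|C|%:R).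

Local Open Scope classical_set_scope.

Definition PC (R : realType) (n : nat) (E : {set 'I_n * 'I_n})
  (C : {set 'I_n * 'I_n}) : set ('I_n * 'I_n -> R) :=
  [set w | is_dcycle E C /\
     forall C', is_dcycle E C' -> C' != C -> mean_weight w C < mean_weight w C'].

Definition Binf (R : realType) (n : nat) (E : {set 'I_n * 'I_n})
  (r : 'I_n * 'I_n -> R) (delta : R) : set ('I_n * 'I_n -> R) :=
  [set w | forall e, e \in E -> `|r e - w e| <= delta].

Definition strongly_connected (n : nat) (E : {set 'I_n * 'I_n}) :=
  forall i j : 'I_n, connect (fun x y => (x, y) \in E) i j.

Definition out_nonempty (n : nat) (E : {set 'I_n * 'I_n}) :=
  forall i : 'I_n, exists j : 'I_n, (i, j) \in E.

Definition mutually_independent (R : realType) (d : measure_display)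
  (T : measurableType d) (P : probability T R) (I : finType) (S : {set I})
  (X : I -> T -> R) :=
  forall (J : {set I}) (A : I -> set R),
    J \subset S -> (forall i, measurable (A i)) ->
    P [set t | forall i, i \in J -> A i (X i t)] =
    (\prod_(i in J) P (X i @^-1` A i))%E.

Definition has_density (R : realType) (d : measure_display)
  (T : measurableType d) (P : probability T R) (X : T -> R) (f : R -> R) :=
  measurable_fun setT X /\ measurable_fun setT f /\ (forall y, 0 <= f y) /\
  forall A : set R, measurable A ->
    P (X @^-1` A) = (\int[@lebesgue_measure R]_(y in A) (f y)%:E)%E.

From HB Require Import structures.
From mathcomp Require Import all_boot all_order all_algebra.
From mathcomp Require Import all_classical all_reals all_analysis.
From mathcomp Require Import ring lra measurable_realfun.
Set Implicit Arguments.
Unset Strict Implicit.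
Unset Printing Implicit Defensive.

Import Order.TTheory GRing.Theory Num.Theory.
Local Open Scope ring_scope.
Local Open Scope classical_set_scope.

(* Call an edge [e] ambiguous for weights [v] when it lies on a minimum-mean
   cycle while some cycle avoiding [e] has mean weight within [2 delta] of the
   minimum.  If the [delta]-ball around [r] lies in no [P^C], some edge is
   ambiguous for [r].  Fix the other weights up to a grid of mesh
   [h = delta / 2]: raising [r e] by more than [L = n (2 delta + 2 h) = 3 n delta]
   makes every cycle through [e] lose against the cycle avoiding [e], so within
   one grid cell the ambiguous values of [r e] lie in a window of length [L].
   By independence and the density bound, [e] is ambiguous with probability at
   most [phi L], and the union bound over the [m] edges gives
   [m phi 3 n delta = 1 / n]. *)

Lemma fpath_closed (T : eqType) (g : T -> T) (Q : T -> Prop) x q :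
  fpath g x q -> Q x -> (forall y, Q y -> Q (g y)) -> forall y, y \in q -> Q y.
Proof.
elim: q x => [|z q IH] x //= /andP[/eqP gx pq] Qx HQ y.
rewrite inE => /orP[/eqP->|yq]; first by rewrite -gx; apply: HQ.
by apply: (IH z) => //; rewrite -gx; apply: HQ.
Qed.

Lemma next_closed (T : eqType) (s : seq T) (Q : T -> Prop) x :
  uniq s -> x \in s -> Q x -> (forall y, y \in s -> Q y -> Q (next s y)) ->
  forall y, y \in s -> Q y.
Proof.
move=> us xs Qx HQ y ys.
have [i q rq] := rot_to xs.
have : fcycle (next s) (rot i s) by rewrite rot_cycle cycle_next.
rewrite rq /= rcons_path => /andP[pq _].
have : y \in x :: q by rewrite -rq mem_rot.
rewrite inE => /orP[/eqP->//|yq].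
suff [] : y \in s /\ Q y by [].
apply: (fpath_closed (Q := fun z => z \in s /\ Q z) pq) => // z [zs Qz].
by rewrite mem_next; split=> //; apply: HQ.
Qed.

Section DirectedCycles.
Variables (n : nat) (E : {set 'I_n * 'I_n}).
Implicit Types C : {set 'I_n * 'I_n}.

Lemma dcycle_subset C : is_dcycle E C -> C \subset E.
Proof. by case=> s []. Qed.

Lemma dcycle_card_gt0 C : is_dcycle E C -> (0 < #|C|)%N.
Proof.
case=> -[|x s] [] // _ _ -> _; apply/card_gt0P; exists (x, next (x :: s) x).
by apply/imsetP; exists x; rewrite ?mem_head.
Qed.

Lemma dcycle_card_le C : is_dcycle E C -> (#|C| <= n)%N.
Proof.
case=> s [_ _ -> _]; apply: leq_trans (leq_imset_card _ _) _.
by rewrite (leq_trans (max_card _)) // card_ord.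
Qed.

(* Both cycles share the successor map on the vertices of [C1], which are
   therefore closed under the successor map of [C2]. *)
Lemma dcycle_subset_eq C1 C2 : is_dcycle E C1 -> is_dcycle E C2 ->
  C1 \subset C2 -> C1 = C2.
Proof.
case=> -[|x0 s1] [] // _ us1 -> _ [s2 [_ us2 -> _]] /fintype.subsetP sub12.
have next12 x : x \in x0 :: s1 -> x \in s2 /\ next s2 x = next (x0 :: s1) x.
  move=> xs1; have /sub12/imsetP[y ys2 [-> <-]] : (x, next (x0 :: s1) x) \in
    [set (x, next (x0 :: s1) x) | x in x0 :: s1]%SET by apply/imsetP; exists x.
  by [].
have [x0s2 _] := next12 _ (mem_head _ _).
have s21 : {subset s2 <= x0 :: s1}.
  apply: (next_closed us2 x0s2 (mem_head _ _)) => y _ ys1.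
  by have [_ ->] := next12 _ ys1; rewrite mem_next.
apply/eqP; rewrite finset.eqEsubset; apply/andP; split; apply/fintype.subsetP => //.
move=> p /imsetP[y ys2 ->]; apply/imsetP; exists y; first exact: s21.
by have [_ ->] := next12 _ (s21 _ ys2).
Qed.

Lemma dcycle_exists : (0 < n)%N -> out_nonempty E -> strongly_connected E ->
  exists C, is_dcycle E C.
Proof.
move=> n0 out_E connE; pose x0 : 'I_n := Ordinal n0.
have [j x0j] := out_E x0.
have /connectP[p pp lp] := connE j x0.
case: (shortenP pp) lp => p' pp' up' _ lp'.
exists [set (x, next (j :: p') x) | x in j :: p']%SET; exists (j :: p'); split => //.
apply/fintype.subsetP => _ /imsetP[x xs ->].
have cyc : cycle (fun x y => (x, y) \in E) (j :: p').
  by rewrite /= rcons_path pp' /= -lp'.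
exact: next_cycle cyc xs.
Qed.

End DirectedCycles.

Section MeanWeight.
Variables (R : realType) (n : nat).
Implicit Types (v w : 'I_n * 'I_n -> R) (C : {set 'I_n * 'I_n}).

Lemma mean_weightB v w C :
  mean_weight w C - mean_weight v C = (\sum_(e in C) (w e - v e)) / #|C|%:R.
Proof. by rewrite /mean_weight -mulrBl sumrB. Qed.

Lemma mean_weight_le_shift v w C h : (0 < #|C|)%N ->
  (forall e, e \in C -> w e <= v e + h) -> mean_weight w C <= mean_weight v C + h.
Proof.
move=> C0 le_wv; rewrite -lerBlDl mean_weightB ler_pdivrMr ?ltr0n //.
rewrite mulr_natr -sumr_const; apply: ler_sum => e eC.
by have := le_wv e eC; lra.
Qed.

Lemma mean_weight_raise_edge v w C e0 X h : (0 < #|C|)%N -> (#|C| <= n)%N ->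
  e0 \in C -> 0 <= X -> 0 <= h -> v e0 + X <= w e0 ->
  (forall e, e \in C -> e != e0 -> v e - h <= w e) ->
  mean_weight v C + X / n%:R - h <= mean_weight w C.
Proof.
move=> C0 Cn e0C X0 h0 raise_e0 le_vw.
have k0 : 0 < #|C|%:R :> R by rewrite ltr0n.
have kn : #|C|%:R <= n%:R :> R by rewrite ler_nat.
suff : X / n%:R - h <= mean_weight w C - mean_weight v C by lra.
have sum_ge : X - h * #|C|%:R <= \sum_(e in C) (w e - v e).
  rewrite (bigD1 e0) //= mulr_natr -sumr_const (bigD1 e0) //=.
  have : \sum_(e in C | e != e0) (- h) <= \sum_(e in C | e != e0) (w e - v e).
    by apply: ler_sum => e /andP[eC ne]; have := le_vw e eC ne; lra.
  rewrite sumrN; lra.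
rewrite mean_weightB.
apply: (@le_trans _ _ ((X - h * #|C|%:R) / #|C|%:R)); last by rewrite ler_pM2r ?invr_gt0.
rewrite mulrBl -mulrA mulfV ?gt_eqF // mulr1 lerD2r ler_wpM2l //.
by rewrite lef_pV2 ?posrE // (lt_le_trans k0).
Qed.

End MeanWeight.

Lemma dist_le_of_floor_eq (R : realType) (h a b : R) : 0 < h ->
  Num.floor (a / h) = Num.floor (b / h) -> `|a - b| <= h.
Proof.
move=> h0 eq_floor.
have := floor_itv (a / h); have := floor_itv (b / h); rewrite eq_floor intrD.
set k := (Num.floor (b / h))%:~R => /andP[kb bk] /andP[ka ak].
rewrite -[a](mulfVK (lt0r_neq0 h0)) -[b](mulfVK (lt0r_neq0 h0)) -mulrBl normrM.
rewrite (gtr0_norm h0); apply: ler_piMl; first exact: ltW.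
by rewrite ler_norml; apply/andP; split; lra.
Qed.

Definition grid_index (R : realType) (I : finType) (h : R) (J : {set I})
  (x : I -> R) : {ffun I -> int} :=
  [ffun i => if i \in J then Num.floor (x i / h) else 0].

Section Ambiguity.
Variables (R : realType) (n : nat) (E : {set 'I_n * 'I_n}) (delta : R).
Implicit Types (v w : 'I_n * 'I_n -> R) (C : {set 'I_n * 'I_n}).

Definition ambiguous e v := exists C1 C2,
  [/\ is_dcycle E C1, is_dcycle E C2, e \in C1, e \notin C2 &
   mean_weight v C2 <= mean_weight v C1 + 2 * delta /\
   forall C, is_dcycle E C -> mean_weight v C1 <= mean_weight v C].

Lemma ambiguous_of_unstable v C0 : is_dcycle E C0 ->
  ~ (exists C, is_dcycle E C /\ Binf E v delta `<=` PC E C) ->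
  exists2 e, e \in E & ambiguous e v.
Proof.
move=> dC0 unstable.
have [C1 /asboolP dC1 minC1] :=
  arg_minP (mean_weight v) (P := fun C => `[< is_dcycle E C >]) (asboolT dC0).
have /existsNP[w /not_implyP[Bw notPC]] : ~ (Binf E v delta `<=` PC E C1).
  by move=> sub; apply: unstable; exists C1.
have /existsNP[C2 /not_implyP[dC2 /not_implyP[neC21 /negP]]] :
    ~ forall C2, is_dcycle E C2 -> C2 != C1 -> mean_weight w C1 < mean_weight w C2.
  by move=> lt; apply: notPC.
rewrite -leNgt => le_w21.
have near_v C : is_dcycle E C -> `|mean_weight v C - mean_weight w C| <= delta.
  move=> dC; have C_gt0 := dcycle_card_gt0 dC.
  have dist e : e \in C -> `|v e - w e| <= delta.
    by move=> eC; apply: Bw; apply: fintype.subsetP (dcycle_subset dC) e eC.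
  have le_vw : mean_weight v C <= mean_weight w C + delta.
    by apply: mean_weight_le_shift => // e /dist; rewrite ler_norml; lra.
  have le_wv : mean_weight w C <= mean_weight v C + delta.
    by apply: mean_weight_le_shift => // e /dist; rewrite ler_norml; lra.
  by rewrite ler_norml; apply/andP; split; lra.
have /fintype.subsetPn[e eC1 eC2] : ~~ (C1 \subset C2).
  by apply: contra neC21 => /(dcycle_subset_eq dC1 dC2) ->.
exists e; first exact: fintype.subsetP (dcycle_subset dC1) e eC1.
exists C1, C2; split => //; split; last by move=> C dC; apply/minC1/asboolP.
by have := near_v _ dC1; have := near_v _ dC2; rewrite !ler_norml; lra.
Qed.

Lemma ambiguous_gap e v w h : 0 <= h -> ambiguous e v -> ambiguous e w ->
  (forall i, i \in E -> i != e -> `|v i - w i| <= h) ->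
  w e - v e <= n%:R * (2 * delta + 2 * h).
Proof.
move=> h0 [C1 [C2 [dC1 dC2 _ eC2 [near_v min_v]]]] [D1 [_ [dD1 _ eD1 _ [_ min_w]]]] close.
have n0 : 0 < n%:R :> R.
  by rewrite ltr0n (leq_trans (dcycle_card_gt0 dD1) (dcycle_card_le dD1)).
have delta0 : 0 <= delta by have := min_v C2 dC2; lra.
have [X0|] := leP 0 (w e - v e); last first.
  by move/ltW/le_trans; apply; apply: mulr_ge0; [apply: ltW | lra].
have dist i : i \in E -> i != e -> v i - h <= w i /\ w i <= v i + h.
  by move=> iE ne; have := close i iE ne; rewrite ler_norml; lra.
have raise_D1 : mean_weight v D1 + (w e - v e) / n%:R - h <= mean_weight w D1.
  apply: (mean_weight_raise_edge (dcycle_card_gt0 dD1) (dcycle_card_le dD1) eD1 X0 h0).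
    by rewrite addrCA subrr addr0.
  by move=> i iD1 ne; case: (dist i (fintype.subsetP (dcycle_subset dD1) i iD1) ne).
have shift_C2 : mean_weight w C2 <= mean_weight v C2 + h.
  apply: mean_weight_le_shift (dcycle_card_gt0 dC2) _ => i iC2.
  have ne : i != e by apply: contraNneq eC2 => <-.
  by case: (dist i (fintype.subsetP (dcycle_subset dC2) i iC2) ne).
have min_D1 := min_v D1 dD1; have min_C2 := min_w C2 dC2.
have : (w e - v e) / n%:R <= 2 * delta + 2 * h by lra.
by rewrite ler_pdivrMr // mulrC.
Qed.

Definition ambiguous_values e h (g : {ffun 'I_n * 'I_n -> int}) : set R :=
  [set x | exists v, [/\ ambiguous e v, v e = x &
     forall i, i \in E :\ e -> Num.floor (v i / h) = g i]].

Lemma ambiguous_value_window e v h : 0 < h -> ambiguous e v ->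
  inf (ambiguous_values e h (grid_index h (E :\ e) v)) <= v e <=
    inf (ambiguous_values e h (grid_index h (E :\ e) v)) + n%:R * (2 * delta + 2 * h).
Proof.
move=> h0 amb_v; set g := grid_index h (E :\ e) v.
have mem_v : ambiguous_values e h g (v e).
  by exists v; split => // i iEe; rewrite ffunE iEe.
have lb x : ambiguous_values e h g x -> v e - n%:R * (2 * delta + 2 * h) <= x.
  move=> [w [amb_w <- cell_w]].
  suff : v e - w e <= n%:R * (2 * delta + 2 * h) by lra.
  apply: ambiguous_gap (ltW h0) amb_w amb_v _ => i iE ne.
  have iEe : i \in E :\ e by rewrite !inE ne iE.
  by apply: dist_le_of_floor_eq => //; rewrite cell_w // ffunE iEe.
have inf_le : inf (ambiguous_values e h g) <= v e.
  by apply: ge_inf mem_v; exists (v e - n%:R * (2 * delta + 2 * h)) => x /lb.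
have le_inf : v e - n%:R * (2 * delta + 2 * h) <= inf (ambiguous_values e h g).
  by apply: lb_le_inf; [exists (v e) | move=> x /lb].
by rewrite inf_le /=; lra.
Qed.

End Ambiguity.

Section LinearForms.
Variables (R : realType) (n : nat) (E : {set 'I_n * 'I_n}).
Implicit Types (a v w : 'I_n * 'I_n -> R) (C D : {set 'I_n * 'I_n}).

Definition lin_form a w := \sum_(e in E) a e * w e.

(* The maximum of [lin_form a] over the sup-norm ball is attained at
   [v + delta * sgn a]. *)
Lemma ball_lin_form_lt0 a v delta : 0 <= delta ->
  (forall w, Binf E v delta w -> lin_form a w < 0) <->
  lin_form a v + delta * \sum_(e in E) `|a e| < 0.
Proof.
move=> delta0; split => [neg|neg w Bw].
  pose w e := v e + delta * Num.sg (a e).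
  have Bw : Binf E v delta w.
    move=> e _; rewrite /w opprD addrA subrr sub0r normrN normrM ger0_norm //.
    by rewrite normr_sg; case: (a e != 0) => /=; lra.
  have := neg w Bw; rewrite /lin_form /w.
  under eq_bigr => e _ do rewrite mulrDr mulrCA (mulrC (a e) (Num.sg _)) -normrEsg.
  by rewrite big_split /= mulr_sumr.
apply: le_lt_trans neg; rewrite /lin_form.
have -> : \sum_(e in E) a e * w e =
    \sum_(e in E) a e * v e + \sum_(e in E) a e * (w e - v e).
  by rewrite -big_split /=; apply: eq_bigr => e _; rewrite -mulrDr addrCA subrr addr0.
rewrite lerD2l mulr_sumr; apply: ler_sum => e eE.
rewrite (le_trans (ler_norm _)) // normrM mulrC ler_wpM2r // distrC.
exact: Bw.
Qed.

Lemma mean_weight_lin_form w C : C \subset E ->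
  mean_weight w C = lin_form (fun e => (e \in C)%:R / #|C|%:R) w.
Proof.
move=> CE; rewrite /mean_weight /lin_form big_distrl /=.
rewrite big_mkcond [RHS]big_mkcond; apply: eq_bigr => e _.
case: (boolP (e \in C)) => [eC|_]; last by case: (e \in E); rewrite ?mul0r.
by rewrite (fintype.subsetP CE e eC) mul1r mulrC.
Qed.

Definition mean_gap C D e : R := (e \in C)%:R / #|C|%:R - (e \in D)%:R / #|D|%:R.

Lemma mean_weight_lt_lin_form w C D : C \subset E -> D \subset E ->
  (mean_weight w C < mean_weight w D) = (lin_form (mean_gap C D) w < 0).
Proof.
move=> CE DE; rewrite !mean_weight_lin_form // -subr_lt0 /lin_form -sumrB.
by congr (_ < 0); apply: eq_bigr => e _; rewrite mulrBl.
Qed.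

End LinearForms.
Arguments mean_gap {R n} C D e.

Section StableEvent.
Context (R : realType) d (T : measurableType d) (n : nat) (E : {set 'I_n * 'I_n}).
Variables (r : 'I_n * 'I_n -> T -> R) (delta : R).
Hypothesis delta0 : 0 <= delta.
Hypothesis mr : forall e, e \in E -> measurable_fun setT (r e).

Lemma measurable_lin_form_lt a c :
  measurable [set t | lin_form E a (fun e => r e t) + c < 0].
Proof.
pose g t := \sum_(e <- index_enum ('I_n * 'I_n)%type)
   (if e \in E then a e * r e t else 0) + c.
have mg : measurable_fun setT g.
  apply: measurable_funD; last exact: measurable_cst.
  apply: measurable_sum => e; case: (boolP (e \in E)) => eE.
    by apply: measurable_funM; [exact: measurable_cst | exact: mr].
  exact: measurable_cst.
have := mg measurableT _ (measurable_itv `]-oo, 0[%R).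
rewrite setTI; congr measurable; apply/seteqP; split => t /=;
  by rewrite /g /lin_form in_itv /= -big_mkcond.
Qed.

Lemma measurable_stable : measurable
  [set t | exists C, is_dcycle E C /\ Binf E (fun e => r e t) delta `<=` PC E C].
Proof.
pose strict C D := [set t | lin_form E (mean_gap C D) (fun e => r e t) +
  delta * \sum_(e in E) `|mean_gap C D e| < 0].
have -> : [set t | exists C, is_dcycle E C /\ Binf E (fun e => r e t) delta `<=` PC E C] =
    \bigcup_(C in [set C | is_dcycle E C])
      \bigcap_(D in [set D | is_dcycle E D /\ D != C]) strict C D.
  apply/seteqP; split => t /=.
    move=> [C [dC stableC]]; exists C => // D [dD neDC].
    apply: (ball_lin_form_lt0 _ _ _ delta0).1 => w /stableC[_ minC].
    by rewrite -mean_weight_lt_lin_form ?(dcycle_subset dC) ?(dcycle_subset dD) ?minC.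
  move=> [C dC stableC]; exists C; split=> // w Bw; split=> // D dD neDC.
  have := (ball_lin_form_lt0 _ _ _ delta0).2 (stableC D (conj dD neDC)) w Bw.
  by rewrite -mean_weight_lt_lin_form ?(dcycle_subset dC) ?(dcycle_subset dD).
apply: fin_bigcup_measurable; first exact: finite_finset.
move=> C _; apply: fin_bigcap_measurable; first exact: finite_finset.
by move=> D _; apply: measurable_lin_form_lt.
Qed.

End StableEvent.

Section MeasurableEvents.
Context d (T : measurableType d).

Lemma measurable_and_const (Q : Prop) (A : set T) :
  measurable A -> measurable [set t | Q /\ A t].
Proof.
move=> mA; have [q|nq] := pselect Q.
  by rewrite (_ : [set t | _] = A) //; apply/seteqP; split => t //= [].
by rewrite (_ : [set t | _] = set0) //; apply/seteqP; split => t //= [].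
Qed.

Lemma measurable_forall_in (R : realType) (I : finType) (J : {set I})
    (X : I -> T -> R) (B : I -> set R) :
  (forall i, i \in J -> measurable_fun setT (X i)) -> (forall i, measurable (B i)) ->
  measurable [set t | forall i, i \in J -> B i (X i t)].
Proof.
move=> mX mB; change (measurable (\bigcap_(i in [set i | i \in J]) X i @^-1` B i)).
apply: fin_bigcap_measurable; first exact: finite_finset.
by move=> i iJ; rewrite -[X in measurable X]setTI; apply: mX.
Qed.

End MeasurableEvents.

Section WindowEvent.
Context (R : realType) d (T : measurableType d) (P : probability T R).
Variables (I : finType) (E : {set I}) (X : I -> T -> R) (e : I).
Variables (h L c : R) (lo : {ffun I -> int} -> R).
Hypothesis indep : mutually_independent P E X.
Hypothesis eE : e \in E.
Hypothesis mX : forall i, i \in E -> measurable_fun setT (X i).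
Hypothesis c0 : 0 <= c.
Hypothesis itv_prob : forall a, (P (X e @^-1` `[a, (a + L)%R]) <= c%:E)%E.

Definition grid_cell (g : {ffun I -> int}) i : set R :=
  [set x | Num.floor (x / h) = g i].

(* Requiring grid indices to vanish off [E :\ e] makes the cell events of
   distinct indices disjoint. *)
Definition grid_supported (g : {ffun I -> int}) :=
  forall i, i \notin E :\ e -> g i = 0.

Definition window_cell g i : set R :=
  if i == e then `[lo g, (lo g + L)%R] else grid_cell g i.

Definition cell_event g :=
  [set t | grid_supported g /\ forall i, i \in E :\ e -> grid_cell g i (X i t)].

Definition window_event g :=
  [set t | grid_supported g /\ forall i, i \in E -> window_cell g i (X i t)].

(* Grid indices are enumerated through [pickle_inv], so that countable
   additivity applies to events indexed by them. *)
Definition pickle_event (A : {ffun I -> int} -> set T) (k : nat) :=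
  if pickle_inv k is Some g then A g else set0.

Definition window_union := \bigcup_k pickle_event window_event k.

Lemma measurable_grid_cell g i : measurable (grid_cell g i).
Proof.
have mf : measurable_fun setT (fun x : R => x / h).
  by apply: measurable_funM; [exact: measurable_id | exact: measurable_cst].
have := mf measurableT _ (measurable_itv `[(g i)%:~R, (g i + 1)%:~R[%R).
rewrite setTI; congr measurable; apply/seteqP; split => x /=;
  by rewrite in_itv /= /grid_cell -floor_eq => /eqP.
Qed.

Lemma measurable_window_cell g i : measurable (window_cell g i).
Proof.
rewrite /window_cell; case: ifP => _; first exact: measurable_itv.
exact: measurable_grid_cell.
Qed.

Lemma measurable_pickle_event A :
  (forall g, measurable (A g)) -> forall k, measurable (pickle_event A k).
Proof. by move=> mA k; rewrite /pickle_event; case: pickle_inv. Qed.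

Lemma measurable_cell_event g : measurable (cell_event g).
Proof.
apply: measurable_and_const; apply: measurable_forall_in (measurable_grid_cell g).
by move=> i /setD1P[_]; apply: mX.
Qed.

Lemma measurable_window_event g : measurable (window_event g).
Proof.
exact/measurable_and_const/(measurable_forall_in mX (measurable_window_cell g)).
Qed.

Lemma measurable_window_union : measurable window_union.
Proof.
by apply: bigcupT_measurable; apply: measurable_pickle_event measurable_window_event.
Qed.

Lemma window_event_prob g :
  P (window_event g) = (P (X e @^-1` `[lo g, (lo g + L)%R]) * P (cell_event g))%E.
Proof.
have [sg|nsg] := pselect (grid_supported g); last first.
  have -> : cell_event g = set0 by apply/seteqP; split => t //= [].
  have -> : window_event g = set0 by apply/seteqP; split => t //= [].
  by rewrite measure0 mule0.
rewrite (_ : window_event g = [set t | forall i, i \in E -> window_cell g i (X i t)]);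
  last by apply/seteqP; split => t /=; [case | split].
rewrite (_ : cell_event g = [set t | forall i, i \in E :\ e -> grid_cell g i (X i t)]);
  last by apply/seteqP; split => t /=; [case | split].
rewrite (indep (subxx E) (measurable_window_cell g)).
rewrite (indep (subsetDl E [set e]) (measurable_grid_cell g)).
rewrite (bigD1 e) //=; congr (_ * _)%E; first by rewrite /window_cell eqxx.
apply: eq_big => i; first by rewrite !inE andbC.
by move=> /andP[_ ne]; rewrite /window_cell (negbTE ne).
Qed.

Lemma trivIset_cell_events : trivIset setT (pickle_event cell_event).
Proof.
move=> k1 k2 _ _ [t []]; rewrite /pickle_event.
case e1: (pickle_inv k1) => [g1|] //; case e2: (pickle_inv k2) => [g2|] //.
move=> [sg1 cell1] [sg2 cell2].
have g12 : g1 = g2.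
  apply/ffunP => i; have [iEe|iEe] := boolP (i \in E :\ e).
    by rewrite -(cell1 i iEe) -(cell2 i iEe).
  by rewrite sg1 ?sg2.
have := @pickle_invK {ffun I -> int} k1; have := @pickle_invK {ffun I -> int} k2.
by rewrite e1 e2 /= g12 => -> ->.
Qed.

Lemma window_union_prob_le : (P window_union <= c%:E)%E.
Proof.
have mcell := measurable_pickle_event measurable_cell_event.
have mwin := measurable_pickle_event measurable_window_event.
apply: (@le_trans _ _ (\sum_(k <oo) P (pickle_event window_event k))%E).
  by apply: measure_sigma_subadditive => //; apply: bigcupT_measurable.
apply: (@le_trans _ _ (\sum_(k <oo) (c%:E * P (pickle_event cell_event k)))%E).
  apply: lee_nneseries => k _; first by move=> _; exact: measure_ge0.
  rewrite /pickle_event; case: pickle_inv => [g|]; last by rewrite !measure0 mule0.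
  by rewrite window_event_prob lee_wpmul2r.
rewrite nneseriesZl; last by move=> k _; exact: measure_ge0.
rewrite -[leRHS]mule1 lee_wpmul2l ?lee_fin //.
rewrite -measure_semi_bigcup //; first exact/probability_le1/bigcupT_measurable.
  exact: trivIset_cell_events.
exact: bigcupT_measurable.
Qed.

Lemma window_union_cover t :
  let g := grid_index h (E :\ e) (X^~ t) in
  lo g <= X e t <= lo g + L -> window_union t.
Proof.
move=> g in_window; exists (pickle g) => //; rewrite /pickle_event pickleK_inv.
split=> [i /negbTE iEe|i iE]; first by rewrite ffunE iEe.
rewrite /window_cell; case: eqP => [->|/eqP ne]; first by rewrite /= in_itv.
by rewrite /grid_cell /= ffunE !inE ne iE.
Qed.

End WindowEvent.

Section ProbabilityBounds.
Context (R : realType) d (T : measurableType d) (P : probability T R).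

Lemma density_itv_le (X : T -> R) (f : R -> R) (phi a L : R) :
  has_density P X f -> (forall y, f y <= phi) -> 0 <= L ->
  (P (X @^-1` `[a, (a + L)%R]) <= (phi * L)%:E)%E.
Proof.
move=> [_ [mf [f0 densX]]] f_le L0; rewrite densX; last exact: measurable_itv.
apply: (@le_trans _ _
  (\int[@lebesgue_measure R]_(y in `[a, (a + L)%R]) (cst phi%:E) y)%E).
  apply: ge0_le_integral; first exact: measurable_itv.
  - by move=> y _; rewrite lee_fin.
  - by apply/measurable_EFinP; apply: measurable_funS mf => //; exact: measurable_itv.
  - exact: measurable_cst.
  - by move=> y _; rewrite lee_fin.
rewrite integral_cst; last exact: measurable_itv.
set len := (X in (_ * X)%E).
have -> : len = (if (a%:E < (a + L)%:E)%E then ((a + L)%:E - a%:E)%E else 0%E).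
  exact: lebesgue_measure_itv.
case: ifP => _; last first.
  by rewrite mule0 lee_fin mulr_ge0 // (le_trans (f0 a)).
by rewrite -EFinB -EFinM lee_fin addrC addKr.
Qed.

Lemma prob_cover_le (I : finType) (S : {set I}) (F : I -> set T) (A : set T) (c : R) :
  measurable A -> (forall i, i \in S -> measurable (F i) /\ (P (F i) <= c%:E)%E) ->
  A `<=` [set t | exists2 i, i \in S & F i t] -> (P A <= (#|S|%:R * c)%:E)%E.
Proof.
move=> mA F_le A_sub.
apply: (@le_trans _ _ (\sum_(i \in [set` enum S]) P (F i))%E).
  apply: content_sub_fsum => //.
    by move=> i /=; rewrite mem_enum => /F_le[].
  by move=> t /A_sub[i iS Fit]; exists i => //; rewrite /= mem_enum.
rewrite -fsbig_seq ?enum_uniq // big_seq.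
apply: (@le_trans _ _ (\sum_(i <- enum S | i \in enum S) c%:E)%E).
  by apply: lee_sum => i; rewrite mem_enum => /F_le[].
rewrite -big_seq sumEFin lee_fin big_const_seq count_predT -cardE iter_addr.
by rewrite addr0 mulr_natl.
Qed.

Lemma prob_ge_of_setC_le (A : set T) (x : R) : measurable A ->
  (P (~` A) <= x%:E)%E -> ((1 - x)%:E <= P A)%E.
Proof.
move=> mA; rewrite probability_setC //.
have := probability_le1 P mA; have := measure_ge0 P A.
by case: (P A) => [y| |] //=; rewrite -EFinB !lee_fin; lra.
Qed.

End ProbabilityBounds.

Theorem mainTheorem6 (R : realType) (d : measure_display) (T : measurableType d)
  (P : probability T R) (n : nat) (E : {set 'I_n * 'I_n})
  (r : 'I_n * 'I_n -> T -> R) (f : 'I_n * 'I_n -> R -> R) (phi : R) :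
  (0 < n)%N ->
  out_nonempty E ->
  strongly_connected E ->
  mutually_independent P E r ->
  (forall e, e \in E -> has_density P (r e) (f e)) ->
  0 < phi ->
  (forall e y, e \in E -> f e y <= phi) ->
  let delta := 1 / ((3 * n ^ 2 * #|E|)%:R * phi) in
  ((1 - 1 / n%:R)%:E <=
   P [set t | exists C, is_dcycle E C /\
                Binf E (fun e => r e t) delta `<=` PC E C])%E.
Proof.
move=> n0 out_E connE indep dens phi0 f_le /=.
set delta := 1 / ((3 * n ^ 2 * #|E|)%:R * phi).
have E0 : (0 < #|E|)%N.
  by have [j x0j] := out_E (Ordinal n0); apply/card_gt0P; exists (Ordinal n0, j).
have delta0 : 0 < delta by rewrite divr_gt0 // mulr_gt0 // ltr0n !muln_gt0 n0 E0.
have mr e : e \in E -> measurable_fun setT (r e) by case/dens.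
have [C0 dC0] := dcycle_exists n0 out_E connE.
pose h := delta / 2; pose L := n%:R * (2 * delta + 2 * h).
have L0 : 0 <= L by rewrite /L /h mulr_ge0 //; lra.
have mstable := measurable_stable (ltW delta0) mr.
apply: prob_ge_of_setC_le => //.
have -> : 1 / n%:R = #|E|%:R * (phi * L).
  rewrite /L /h /delta !natrM; field.
  by rewrite !pnatr_eq0 -!lt0n n0 E0 lt0r_neq0.
apply: (prob_cover_le (F := fun e => window_union E r e h L
  (fun g => inf (ambiguous_values E delta e h g)))); first exact: measurableC.
  move=> e eE; split; first exact: measurable_window_union.
  apply: window_union_prob_le => //; first by rewrite mulr_ge0 // ltW.
  by move=> a; apply: density_itv_le (dens e eE) (f_le e ^~ eE) L0.
move=> t /(ambiguous_of_unstable dC0)[e eE amb_e]; exists e => //.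
by apply: window_union_cover; apply: ambiguous_value_window; rewrite // /h divr_gt0.
Qed.
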